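(* Let $d\ge 1$, let $\Omega=\operatorname{diag}(\omega_j)_{j=1}^d\in\mathbb{R}^{d\times d}$ with all $\omega_j\ge 0$, let $\omega=\min_{j:\,\omega_j>0}\omega_j$ be the smallest nonzero frequency, and let $A\in\mathbb{C}^{d\times d}$ be self-adjoint. Let $0<h\le 1$ and let $\psi_1,\phi\colon\mathbb{R}\to\mathbb{R}$ be even functions such that for constants $c_0,c_1\ge0$ \[ |\psi_1(\xi)|\le c_0,\qquad |\phi(\xi)|\le c_0,\qquad |\phi(\xi)-1|\le c_1|\xi|\qquad\text{for all }\xi\in\mathbb{R}. \] Set $\Psi_1=\psi_1(h\Omega)$, $\Phi=\phi(h\Omega)$, and define for $q,\dot q\in\mathbb{C}^d$ \[ \mathcal{H}(q,\dot{q}) = \tfrac12 \|\Omega q\|^2 + \tfrac12 \|\dot{q}\|^2 + \tfrac12 \operatorname{Re}\big((\cos(h\Omega) \Phi q)^* A \Phi q\big) - \tfrac18 h^2 \|\Psi_1 A \Phi q\|^2, \] \[ H(q,\dot q)=\tfrac12 \|\Omega q\|^2 + \tfrac12 \|\dot{q}\|^2 + \tfrac12 q^*Aq . \] Then for all $q,\dot q\in\mathbb{C}^d$, \begin{align*} \big|\mathcal{H}(q,\dot{q}) - \tfrac12 \|\Omega q\|^2 - \tfrac12 \|\dot{q}\|^2\big| &\le \big(\breve{C}+\widehat{C} h^2\big) \|q\|^2, \\ \big|\mathcal{H}(q,\dot{q}) - H(q,\dot{q})\big| &\le \widetilde{C} \min\big(h,\omega^{-1}\big) \|q\| \, \|\Omega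 q\| + \widehat{C} h^2 \|q\|^2 \end{align*} with $\breve{C} = \tfrac12 c_0^2 \|A\|$, $\widehat{C} = \tfrac18 c_0^4 \|A\|^2$ and $\widetilde{C} = \tfrac12 \big(2 c_0^2 + (c_0+1)\max(c_0+1,c_1)\big) \|A\|$.
   Context: $\|\cdot\|$ is the Euclidean norm on $\mathbb{C}^d$ and, for matrices, the induced operator norm; ${}^*$ denotes conjugate transpose. For a function $f\colon\mathbb{R}\to\mathbb{R}$, $f(h\Omega)$ denotes the diagonal matrix $\operatorname{diag}(f(h\omega_j))_{j=1}^d$. *)

From mathcomp Require Import all_boot all_order all_algebra.
From mathcomp Require Import complex.
From mathcomp Require Import classical_sets reals trigo.
Set Implicit Arguments. Unset Strict Implicit. Unset Printing Implicit Defensive.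
Import Order.TTheory GRing.Theory Num.Theory.
Local Open Scope ring_scope.
Local Open Scope complex_scope.

Section Defs.
Variable R : realType.
Local Notation C := R[i].

Definition vnorm2 d (v : 'cV[C]_d) : R :=
  \sum_(i < d) ((complex.Re (v i 0)) ^+ 2 + (complex.Im (v i 0)) ^+ 2).

Definition vnorm d (v : 'cV[C]_d) : R := Num.sqrt (vnorm2 v).

Definition opnorm d (M : 'M[C]_d) : R :=
  sup [set vnorm (M *m x) | x in [set x : 'cV[C]_d | vnorm x <= 1]]%classic.

Definition adj m n (M : 'M[C]_(m, n)) : 'M[C]_(n, m) := map_mx Num.conj (M^T).

Definition selfadjoint d (M : 'M[C]_d) : Prop := adj M = M.

Definition diagC d (v : 'I_d -> R) : 'M[C]_d := diag_mx (\row_j (v j)%:C).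

Definition fdiag d (f : R -> R) (h : R) (w : 'I_d -> R) : 'M[C]_d :=
  diagC (fun j => f (h * w j)).

(* min(h, omega^{-1}) where omega is the smallest nonzero frequency;
   if there is no nonzero frequency, omega^{-1} = +oo by convention, so this is h *)
Definition inv_omega d (w : 'I_d -> R) : R :=
  \big[Num.max/0]_(j < d | 0 < w j) (w j)^-1.
Definition hmin d (h : R) (w : 'I_d -> R) : R :=
  if [exists j, 0 < w j] then Num.min h (inv_omega w) else h.

Definition reform d (u : 'cV[C]_d) (M : 'M[C]_d) (v : 'cV[C]_d) : R :=
  complex.Re ((adj u *m M *m v) 0 0).

Definition modH d (w : 'I_d -> R) (A : 'M[C]_d) (psi1 phi : R -> R) (h : R)
    (q qd : 'cV[C]_d) : R :=
  let Om := diagC w in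
  let Phi := fdiag phi h w in
  let Psi1 := fdiag psi1 h w in
  let Cos := fdiag cos h w in
  (vnorm (Om *m q)) ^+ 2 / 2 + (vnorm qd) ^+ 2 / 2
  + reform (Cos *m Phi *m q) A (Phi *m q) / 2
  - h ^+ 2 / 8 * (vnorm (Psi1 *m A *m Phi *m q)) ^+ 2.

(* energy H; q^* A q is real for self-adjoint A, we take its real part *)
Definition energyH d (w : 'I_d -> R) (A : 'M[C]_d) (q qd : 'cV[C]_d) : R :=
  (vnorm (diagC w *m q)) ^+ 2 / 2 + (vnorm qd) ^+ 2 / 2 + reform q A q / 2.

End Defs.

(* Each estimate bounds real parts of quadratic forms Re((F q)^* A (G q)),
   with F and G diagonal filter matrices, by |F q| |A| |G q| (Cauchy-Schwarz
   and the operator norm).  For the first estimate every filter is bounded by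
   c0, and |cos| <= 1.  For the second one, the splitting
     cos(h Omega) Phi - I = (cos(h Omega) - I) Phi + (Phi - I)
   turns the difference of the two potential terms into three such forms.
   The diagonal functions f = (cos - 1) phi and f = phi - 1 both satisfy
   |f(xi)| <= K min(xi, 1) for xi >= 0; at xi = h omega_j this gives
   |f(h omega_j)| <= K min(h, 1/omega) omega_j, hence
   |f(h Omega) q| <= K min(h, 1/omega) |Omega q|.  The h^2 term is bounded
   crudely through |Psi1 A Phi q| <= c0^2 |A| |q|. *)

From mathcomp Require Import all_boot all_order all_algebra.
From mathcomp Require Import complex.
From mathcomp Require Import boolp classical_sets reals trigo.
From mathcomp Require Import topology normedtype derive.
From mathcomp Require Import lra ring.
Import Order.TTheory GRing.Theory Num.Theory numFieldNormedType.Exports.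
Local Open Scope ring_scope.
Local Open Scope complex_scope.

Set Implicit Arguments.
Unset Strict Implicit.
Unset Printing Implicit Defensive.

Lemma quadratic_ge0_discriminant (R : realFieldType) (a b c : R) :
  0 <= a -> (forall t, 0 <= a * t ^+ 2 + 2 * b * t + c) -> b ^+ 2 <= a * c.
Proof.
move=> a_ge0 p_ge0.
pose p : {poly R} := \poly_(i < 3) [:: c; 2 * b; a]`_i.
have p_ge0' x : 0 <= p.[x].
  rewrite horner_poly !big_ord_recr big_ord0 /=.
  by move: (p_ge0 x); rewrite expr0 expr1 add0r; lra.
have := deg_le2_poly_delta_ge0 (size_poly _ _) _ p_ge0'.
by rewrite !coef_poly /= => /(_ a_ge0); lra.
Qed.

Section ComplexVectors.
Variable R : realType.
Local Notation C := R[i].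

Definition normc2 (z : C) : R := complex.Re z ^+ 2 + complex.Im z ^+ 2.

Lemma normc2_ge0 z : 0 <= normc2 z.
Proof. by rewrite addr_ge0 ?sqr_ge0. Qed.

Lemma normc2_eq0 z : (normc2 z == 0) = (z == 0).
Proof.
rewrite /normc2 paddr_eq0 ?sqr_ge0 // !sqrf_eq0.
by case: z => a b; rewrite eq_complex.
Qed.

Lemma normc2_scale (k : R) z : normc2 (k%:C * z) = k ^+ 2 * normc2 z.
Proof. by case: z => a b; rewrite /normc2 /=; ring. Qed.

Lemma normc2_conj z : normc2 (Num.conj z) = normc2 z.
Proof. by case: z => a b; rewrite /normc2 /= sqrrN. Qed.

Lemma normc2_affine (t : R) u v :
  normc2 (t%:C * u + v) =
  normc2 u * t ^+ 2 + 2 * complex.Re (Num.conj u * v) * t + normc2 v.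
Proof. by case: u => a b; case: v => c e; rewrite /normc2 /=; ring. Qed.

Lemma Re_sum (I : finType) (F : I -> C) :
  complex.Re (\sum_i F i) = \sum_i complex.Re (F i).
Proof. by apply: (big_morph (@complex.Re R)) => // -[a b] [c e]. Qed.

Lemma Im_sum (I : finType) (F : I -> C) :
  complex.Im (\sum_i F i) = \sum_i complex.Im (F i).
Proof. by apply: (big_morph (@complex.Im R)) => // -[a b] [c e]. Qed.

Lemma Re_conjM_sum_le (I : finType) (u v : I -> C) :
  (\sum_i complex.Re (Num.conj (u i) * v i)) ^+ 2 <=
  (\sum_i normc2 (u i)) * (\sum_i normc2 (v i)).
Proof.
apply: quadratic_ge0_discriminant => [|t].
  by apply: sumr_ge0 => i _; exact: normc2_ge0.
have -> : (\sum_i normc2 (u i)) * t ^+ 2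
    + 2 * (\sum_i complex.Re (Num.conj (u i) * v i)) * t + \sum_i normc2 (v i)
  = \sum_i normc2 (t%:C * u i + v i).
  rewrite mulr_sumr !mulr_suml -!big_split /=.
  by apply: eq_bigr => i _; rewrite normc2_affine.
by apply: sumr_ge0 => i _; exact: normc2_ge0.
Qed.

Section Vectors.
Variable d : nat.
Implicit Types (u v x : 'cV[C]_d) (M : 'M[C]_d).

Lemma vnorm2E v : vnorm2 v = \sum_i normc2 (v i 0).
Proof. by []. Qed.

Lemma vnorm2_ge0 v : 0 <= vnorm2 v.
Proof. by apply: sumr_ge0 => i _; exact: normc2_ge0. Qed.

Lemma vnorm_ge0 v : 0 <= vnorm v.
Proof. exact: sqrtr_ge0. Qed.

Lemma vnormK v : vnorm v ^+ 2 = vnorm2 v.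
Proof. by rewrite sqr_sqrtr ?vnorm2_ge0. Qed.

Lemma vnorm_eq0 v : (vnorm v == 0) = (v == 0).
Proof.
rewrite sqrtr_eq0 le_eqVlt ltNge vnorm2_ge0 orbF vnorm2E psumr_eq0; last first.
  by move=> i _; exact: normc2_ge0.
apply/allP/eqP => [v0 | -> i _] /=.
  apply/matrixP => i j; rewrite ord1 mxE; apply/eqP.
  by rewrite -normc2_eq0; exact: v0 (mem_index_enum i).
by rewrite mxE normc2_eq0.
Qed.

Lemma vnorm0 : vnorm (0 : 'cV[C]_d) = 0.
Proof. by apply/eqP; rewrite vnorm_eq0. Qed.

Lemma vnormZ (k : R) v : vnorm (k%:C *: v) = `|k| * vnorm v.
Proof.
rewrite /vnorm !vnorm2E -sqrtr_sqr -sqrtrM ?sqr_ge0 // mulr_sumr.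
by congr Num.sqrt; apply: eq_bigr => i _; rewrite mxE normc2_scale.
Qed.

Lemma Re_adj_mul_le u v : `|complex.Re ((adj u *m v) 0 0)| <= vnorm u * vnorm v.
Proof.
rewrite mxE Re_sum -sqrtrM ?vnorm2_ge0 // -sqrtr_sqr; apply: ler_wsqrtr.
under eq_bigr => i _ do rewrite !mxE.
exact: Re_conjM_sum_le.
Qed.

Lemma reform_le u M v : `|reform u M v| <= vnorm u * vnorm (M *m v).
Proof. by rewrite /reform -mulmxA; exact: Re_adj_mul_le. Qed.

Lemma normc2_mulmx_le M x i :
  normc2 ((M *m x) i 0) <= 2 * (\sum_j normc2 (M i j)) * vnorm2 x.
Proof.
have ReE : complex.Re ((M *m x) i 0) =
    \sum_j complex.Re (Num.conj (Num.conj (M i j)) * x j 0).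
  rewrite mxE Re_sum; apply: eq_bigr => j _.
  by case: (M i j) => a b; case: (x j 0) => c e /=; ring.
(* The imaginary part of [m * x] is the real part of [conj ('i * conj m) * x]. *)
have ImE : complex.Im ((M *m x) i 0) =
    \sum_j complex.Re (Num.conj ('i * Num.conj (M i j)) * x j 0).
  rewrite mxE Im_sum; apply: eq_bigr => j _.
  by case: (M i j) => a b; case: (x j 0) => c e /=; ring.
have ReS := Re_conjM_sum_le (fun j => Num.conj (M i j)) (fun j => x j 0).
have ImS := Re_conjM_sum_le (fun j => 'i * Num.conj (M i j)) (fun j => x j 0).
have normc2_iconj j : normc2 ('i * Num.conj (M i j)) = normc2 (M i j).
  by case: (M i j) => a b; rewrite /normc2 /=; ring.
rewrite -ReE (eq_bigr _ (fun j _ => normc2_conj _)) in ReS.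
rewrite -ImE (eq_bigr _ (fun j _ => normc2_iconj j)) in ImS.
rewrite [normc2 _]/normc2 vnorm2E; lra.
Qed.

Lemma opnorm_image_has_ubound M :
  has_ubound [set vnorm (M *m x) | x in [set x | vnorm x <= 1]]%classic.
Proof.
exists (Num.sqrt (2 * \sum_i \sum_j normc2 (M i j))) => _ [x x_le1 <-].
have vnorm2_le1 : vnorm2 x <= 1.
  by rewrite -vnormK -(expr1n _ 2) ler_sqr ?nnegrE ?vnorm_ge0.
apply: ler_wsqrtr; rewrite vnorm2E mulr_sumr; apply: ler_sum => i _.
apply: (le_trans (normc2_mulmx_le M x i)).
rewrite -[leRHS]mulr1 ler_wpM2l // mulr_ge0 //.
by apply: sumr_ge0 => j _; exact: normc2_ge0.
Qed.

Lemma opnorm_ub M x : vnorm x <= 1 -> vnorm (M *m x) <= opnorm M.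
Proof. by move=> x_le1; apply: ub_le_sup (opnorm_image_has_ubound M) _ _; exists x. Qed.

Lemma opnorm_ge0 M : 0 <= opnorm M.
Proof.
by have := @opnorm_ub M 0; rewrite mulmx0 vnorm0; apply; exact: ler01.
Qed.

Lemma vnorm_mulmx_le M v : vnorm (M *m v) <= opnorm M * vnorm v.
Proof.
have [v0 | v_neq0] := eqVneq v 0.
  by rewrite v0 mulmx0 vnorm0 mulr0.
have nv_gt0 : 0 < vnorm v by rewrite lt_def vnorm_eq0 v_neq0 vnorm_ge0.
pose x := ((vnorm v)^-1)%:C *: v.
have x_le1 : vnorm x <= 1.
  by rewrite vnormZ ger0_norm ?invr_ge0 ?vnorm_ge0 // mulVf // gt_eqF.
have := opnorm_ub M x_le1.
rewrite -scalemxAr vnormZ ger0_norm ?invr_ge0 ?vnorm_ge0 //.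
by rewrite ler_pdivrMl // mulrC.
Qed.

Lemma reformBl u u' M v : reform (u - u') M v = reform u M v - reform u' M v.
Proof.
rewrite /reform -!mulmxA /adj linearB /= map_mxB mulmxBl mxE.
by rewrite [in X in _ + X]mxE; case: (_ 0 0) => a b; case: (_ 0 0).
Qed.

Lemma reformBr u M v v' : reform u M (v - v') = reform u M v - reform u M v'.
Proof.
rewrite /reform !mulmxBr mxE [in X in _ + X]mxE.
by case: (_ 0 0) => a b; case: (_ 0 0).
Qed.

Implicit Types (f g : 'I_d -> R).

Lemma diagC_mulmxE f v i : (diagC f *m v) i 0 = (f i)%:C * v i 0.
Proof. by rewrite mul_diag_mx !mxE. Qed.

Lemma diagC1 : diagC (fun _ : 'I_d => 1 : R) = 1%:M.
Proof.
by rewrite /diagC -diag_const_mx; congr diag_mx; apply/matrixP => i j; rewrite !mxE.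
Qed.

Lemma diagCB f g : diagC f - diagC g = diagC (fun j => f j - g j).
Proof. by apply/matrixP => i j; rewrite !mxE rmorphB /= -mulrnBl. Qed.

Lemma diagCM f g : diagC f *m diagC g = diagC (fun j => f j * g j).
Proof.
by rewrite mulmx_diag; congr diag_mx; apply/matrixP => i j; rewrite !mxE rmorphM.
Qed.

Lemma vnorm_diagC_le f g K v : 0 <= K -> (forall i, `|f i| <= K * `|g i|) ->
  vnorm (diagC f *m v) <= K * vnorm (diagC g *m v).
Proof.
move=> K_ge0 fg; rewrite /vnorm -(ger0_norm K_ge0) -sqrtr_sqr -sqrtrM ?sqr_ge0 //.
apply: ler_wsqrtr; rewrite !vnorm2E mulr_sumr; apply: ler_sum => i _.
rewrite !diagC_mulmxE !normc2_scale mulrA ler_wpM2r ?normc2_ge0 //.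
rewrite -(real_normK (num_real (f i))) -(real_normK (num_real (g i))) -exprMn.
by rewrite ler_sqr ?nnegrE ?mulr_ge0.
Qed.

Lemma vnorm_diagC_le_const f K v : 0 <= K -> (forall i, `|f i| <= K) ->
  vnorm (diagC f *m v) <= K * vnorm v.
Proof.
move=> K_ge0 f_le; rewrite -[v in leRHS]mul1mx -diagC1.
by apply: vnorm_diagC_le => // i; rewrite normr1 mulr1.
Qed.

Lemma inv_omega_ge0 (w : 'I_d -> R) : 0 <= inv_omega w.
Proof. exact: bigmax_ge_id. Qed.

Lemma le_inv_omega (w : 'I_d -> R) j : 0 < w j -> (w j)^-1 <= inv_omega w.
Proof. exact: le_bigmax_cond. Qed.

Lemma hmin_ge0 (h : R) (w : 'I_d -> R) : 0 <= h -> 0 <= hmin h w.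
Proof.
by move=> h_ge0; rewrite /hmin; case: ifP => // _; rewrite le_min h_ge0 inv_omega_ge0.
Qed.

Lemma norm_le_hmin_mul (h K y : R) (w : 'I_d -> R) j : 0 <= K -> 0 <= w j ->
  `|y| <= K * (h * w j) -> `|y| <= K -> `|y| <= K * hmin h w * w j.
Proof.
move=> K_ge0 wj_ge0 y_le_hw y_le_K; rewrite -mulrA /hmin; case: ifP => // _.
have [wj0 | wj_neq0] := eqVneq (w j) 0; first by move: y_le_hw; rewrite wj0 !mulr0.
have wj_gt0 : 0 < w j by rewrite lt_def wj_neq0.
rewrite minEle; case: ifP => // _.
apply: (le_trans y_le_K); rewrite -[leLHS]mulr1 ler_wpM2l //.
by rewrite -(mulVf wj_neq0) ler_wpM2r // le_inv_omega.
Qed.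

Lemma vnorm_fdiag_le (f : R -> R) (K h : R) (w : 'I_d -> R) v :
  0 <= K -> 0 <= h -> (forall j, 0 <= w j) ->
  (forall t, 0 <= t -> `|f t| <= K * t) -> (forall t, `|f t| <= K) ->
  vnorm (fdiag f h w *m v) <= K * hmin h w * vnorm (diagC w *m v).
Proof.
move=> K_ge0 h_ge0 w_ge0 f_le_lin f_le_K.
apply: vnorm_diagC_le => [|j]; first by rewrite mulr_ge0 ?hmin_ge0.
rewrite (ger0_norm (w_ge0 j)); apply: norm_le_hmin_mul => //.
by apply: f_le_lin; rewrite mulr_ge0.
Qed.

End Vectors.
End ComplexVectors.

Lemma norm_cosB1_le (R : realType) (x : R) : `|cos x - 1| <= `|x|.
Proof.
rewrite -cos_norm.
have cos_cont : {within `[0, `|x|], continuous (@cos R)}%classic.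
  by apply: continuous_subspaceT => y; exact: continuous_cos.
have [c _] := MVT_segment (normr_ge0 x) (fun y _ => is_derive_cos y) cos_cont.
rewrite cos0 subr0 => ->; rewrite normrM normrN ger0_norm // -[leRHS]mul1r ler_wpM2r //.
exact: sin_max.
Qed.

Lemma norm_cosB1_le2 (R : realType) (x : R) : `|cos x - 1| <= 2.
Proof. by rewrite (le_trans (ler_normB _ _)) // normr1 lerD2r cos_max. Qed.

Lemma norm_half_sub_le (R : realType) (r B N N' t : R) :
  `|r| <= B -> 0 <= N <= N' -> 0 <= t ->
  `|r / 2 - t / 8 * N ^+ 2| <= B / 2 + t / 8 * N' ^+ 2.
Proof.
move=> r_le_B /andP[N_ge0 N_le] t_ge0.
have tN_le : t / 8 * N ^+ 2 <= t / 8 * N' ^+ 2.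
  by rewrite ler_wpM2l ?divr_ge0 // ler_sqr ?nnegrE // (le_trans N_ge0).
have tN_ge0 : 0 <= t / 8 * N ^+ 2 by rewrite mulr_ge0 ?divr_ge0 ?sqr_ge0.
move: r_le_B; rewrite !ler_norml => /andP[? ?]; apply/andP; split; lra.
Qed.

Section ModifiedEnergy.
Variables (R : realType) (d : nat) (w : 'I_d -> R) (A : 'M[R[i]]_d).
Variables (h c0 c1 : R) (psi1 phi : R -> R).
Hypotheses (w_ge0 : forall j, 0 <= w j) (h_ge0 : 0 <= h) (c0_ge0 : 0 <= c0).
Hypotheses (psi1_le : forall x, `|psi1 x| <= c0) (phi_le : forall x, `|phi x| <= c0).
Hypothesis phiB1_le : forall x, `|phi x - 1| <= c1 * `|x|.
Variable q : 'cV[R[i]]_d.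

Local Notation Phi := (fdiag phi h w).
Local Notation Cos := (fdiag cos h w).
Local Notation a := (opnorm A).
Local Notation n := (vnorm q).
Local Notation nOm := (vnorm (diagC w *m q)).

Lemma vnorm_Phi_le : vnorm (Phi *m q) <= c0 * n.
Proof. exact: vnorm_diagC_le_const. Qed.

Lemma vnorm_A_Phi_le : vnorm (A *m (Phi *m q)) <= c0 * a * n.
Proof.
rewrite (le_trans (vnorm_mulmx_le _ _)) // [c0 * _]mulrC -mulrA.
by rewrite ler_wpM2l ?opnorm_ge0 ?vnorm_Phi_le.
Qed.

Lemma vnorm_Psi1_A_Phi_le : vnorm (fdiag psi1 h w *m A *m Phi *m q) <= c0 ^+ 2 * a * n.
Proof.
rewrite -!mulmxA (le_trans (vnorm_diagC_le_const _ c0_ge0 _)) //.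
by rewrite expr2 -!mulrA ler_wpM2l // mulrA vnorm_A_Phi_le.
Qed.

Lemma reform_Cos_Phi_le :
  `|reform (Cos *m Phi *m q) A (Phi *m q)| <= c0 ^+ 2 * a * n ^+ 2.
Proof.
have Cos_Phi_le : vnorm (Cos *m Phi *m q) <= c0 * n.
  rewrite -mulmxA (le_trans (vnorm_diagC_le_const _ ler01 (fun j => cos_max _))) //.
  by rewrite mul1r vnorm_Phi_le.
rewrite (le_trans (reform_le _ _ _)) //.
rewrite (_ : _ * n ^+ 2 = c0 * n * (c0 * a * n)); last by ring.
by rewrite ler_pM ?vnorm_ge0 ?vnorm_A_Phi_le.
Qed.

Lemma vnorm_Cos_Phi_sub_le :
  vnorm (Cos *m Phi *m q - Phi *m q) <= 2 * c0 * hmin h w * nOm.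
Proof.
rewrite -mulmxBl diagCM diagCB.
rewrite (_ : (fun j => _) = (fun j => (cos (h * w j) - 1) * phi (h * w j))); last first.
  by apply: funext => j; ring.
apply: (vnorm_fdiag_le (f := fun x => (cos x - 1) * phi x)) => // [|t t_ge0|t].
- by rewrite mulr_ge0.
- have := ler_pM (normr_ge0 _) (normr_ge0 _) (norm_cosB1_le t) (phi_le t).
  by rewrite -normrM (ger0_norm t_ge0); have := mulr_ge0 c0_ge0 t_ge0; lra.
- have := ler_pM (normr_ge0 _) (normr_ge0 _) (norm_cosB1_le2 t) (phi_le t).
  by rewrite -normrM.
Qed.

Lemma vnorm_Phi_sub_le : vnorm (Phi *m q - q) <= Num.max (c0 + 1) c1 * hmin h w * nOm.
Proof.
have c0S_le_max : c0 + 1 <= Num.max (c0 + 1) c1 by rewrite le_max lexx.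
rewrite -[q in _ - q]mul1mx -diagC1 -mulmxBl diagCB.
apply: (vnorm_fdiag_le (f := fun x => phi x - 1)) => // [|t t_ge0|t].
- by rewrite (le_trans _ c0S_le_max) ?addr_ge0.
- by rewrite (le_trans (phiB1_le t)) // ger0_norm // ler_wpM2r // le_max lexx orbT.
- by rewrite (le_trans (ler_normB _ _)) // normr1 (le_trans _ c0S_le_max) ?lerD2r.
Qed.

Lemma reform_Cos_Phi_sub_le :
  `|reform (Cos *m Phi *m q) A (Phi *m q) - reform q A q| <=
  (2 * c0 ^+ 2 + (c0 + 1) * Num.max (c0 + 1) c1) * a * hmin h w * n * nOm.
Proof.
set M := Num.max (c0 + 1) c1; set hm := hmin h w.
have -> : reform (Cos *m Phi *m q) A (Phi *m q) - reform q A q =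
    reform (Cos *m Phi *m q - Phi *m q) A (Phi *m q)
    + reform (Phi *m q - q) A (Phi *m q) + reform q A (Phi *m q - q).
  by rewrite !reformBl reformBr !addrA !subrK.
have term1 : `|reform (Cos *m Phi *m q - Phi *m q) A (Phi *m q)| <=
    2 * c0 * hm * nOm * (c0 * a * n).
  by rewrite (le_trans (reform_le _ _ _)) ?ler_pM ?vnorm_ge0 ?vnorm_Cos_Phi_sub_le
    ?vnorm_A_Phi_le.
have term2 : `|reform (Phi *m q - q) A (Phi *m q)| <= M * hm * nOm * (c0 * a * n).
  by rewrite (le_trans (reform_le _ _ _)) ?ler_pM ?vnorm_ge0 ?vnorm_Phi_sub_le
    ?vnorm_A_Phi_le.
have term3 : `|reform q A (Phi *m q - q)| <= n * (a * (M * hm * nOm)).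
  rewrite (le_trans (reform_le _ _ _)) // ler_wpM2l ?vnorm_ge0 //.
  by rewrite (le_trans (vnorm_mulmx_le _ _)) // ler_wpM2l ?opnorm_ge0 ?vnorm_Phi_sub_le.
rewrite (_ : _ * nOm = 2 * c0 * hm * nOm * (c0 * a * n)
    + M * hm * nOm * (c0 * a * n) + n * (a * (M * hm * nOm))); last by ring.
by rewrite (le_trans (ler_normD _ _)) // lerD // (le_trans (ler_normD _ _)) // lerD.
Qed.

Lemma modH_sub_kinetic_le qd :
  `|modH w A psi1 phi h q qd - nOm ^+ 2 / 2 - vnorm qd ^+ 2 / 2| <=
  (c0 ^+ 2 * a / 2 + c0 ^+ 4 * a ^+ 2 / 8 * h ^+ 2) * n ^+ 2.
Proof.
rewrite /modH /=.
set r := reform (Cos *m Phi *m q) A (Phi *m q).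
set N := vnorm (fdiag psi1 h w *m A *m Phi *m q).
set O := nOm; set K := vnorm qd.
rewrite (_ : O ^+ 2 / 2 + K ^+ 2 / 2 + r / 2 - h ^+ 2 / 8 * N ^+ 2
    - O ^+ 2 / 2 - K ^+ 2 / 2 = r / 2 - h ^+ 2 / 8 * N ^+ 2); last by ring.
rewrite (_ : _ * n ^+ 2 =
    c0 ^+ 2 * a * n ^+ 2 / 2 + h ^+ 2 / 8 * (c0 ^+ 2 * a * n) ^+ 2); last by ring.
by rewrite norm_half_sub_le ?sqr_ge0 ?reform_Cos_Phi_le ?vnorm_ge0 ?vnorm_Psi1_A_Phi_le.
Qed.

Lemma modH_sub_energyH_le qd :
  `|modH w A psi1 phi h q qd - energyH w A q qd| <=
  (2 * c0 ^+ 2 + (c0 + 1) * Num.max (c0 + 1) c1) * a / 2 * hmin h w * n * nOm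
  + c0 ^+ 4 * a ^+ 2 / 8 * h ^+ 2 * n ^+ 2.
Proof.
rewrite /modH /energyH /=.
set r := reform (Cos *m Phi *m q) A (Phi *m q); set r0 := reform q A q.
set N := vnorm (fdiag psi1 h w *m A *m Phi *m q).
set O := nOm; set K := vnorm qd.
rewrite (_ : O ^+ 2 / 2 + K ^+ 2 / 2 + r / 2 - h ^+ 2 / 8 * N ^+ 2
    - (O ^+ 2 / 2 + K ^+ 2 / 2 + r0 / 2) = (r - r0) / 2 - h ^+ 2 / 8 * N ^+ 2);
  last by ring.
set M := Num.max (c0 + 1) c1; set hm := hmin h w.
rewrite (_ : (2 * c0 ^+ 2 + (c0 + 1) * M) * a / 2 * hm * n * O
    + c0 ^+ 4 * a ^+ 2 / 8 * h ^+ 2 * n ^+ 2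
  = (2 * c0 ^+ 2 + (c0 + 1) * M) * a * hm * n * O / 2
    + h ^+ 2 / 8 * (c0 ^+ 2 * a * n) ^+ 2); last by ring.
by rewrite norm_half_sub_le ?sqr_ge0 ?reform_Cos_Phi_sub_le ?vnorm_ge0
  ?vnorm_Psi1_A_Phi_le.
Qed.
End ModifiedEnergy.

Unset Implicit Arguments.
Set Strict Implicit.

Theorem lemma2 (R : realType) (d : nat) (w : 'I_d -> R) (A : 'M[R[i]]_d)
    (h c0 c1 : R) (psi1 phi : R -> R) :
  (0 < d)%N ->
  (forall j, 0 <= w j) ->
  selfadjoint A ->
  0 < h -> h <= 1 ->
  0 <= c0 -> 0 <= c1 ->
  (forall x, psi1 (- x) = psi1 x) ->
  (forall x, phi (- x) = phi x) ->
  (forall x, `|psi1 x| <= c0) ->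
  (forall x, `|phi x| <= c0) ->
  (forall x, `|phi x - 1| <= c1 * `|x|) ->
  let Cb := c0 ^+ 2 * opnorm A / 2 in
  let Ch := c0 ^+ 4 * (opnorm A) ^+ 2 / 8 in
  let Ct := (2 * c0 ^+ 2 + (c0 + 1) * Num.max (c0 + 1) c1) * opnorm A / 2 in
  forall q qd : 'cV[R[i]]_d,
    `|modH w A psi1 phi h q qd - (vnorm (diagC w *m q)) ^+ 2 / 2
        - (vnorm qd) ^+ 2 / 2| <= (Cb + Ch * h ^+ 2) * (vnorm q) ^+ 2
    /\
    `|modH w A psi1 phi h q qd - energyH w A q qd|
      <= Ct * hmin h w * vnorm q * vnorm (diagC w *m q) + Ch * h ^+ 2 * (vnorm q) ^+ 2.
Proof.
move=> _ w_ge0 _ h_gt0 _ c0_ge0 _ _ _ psi1_le phi_le phiB1_le Cb Ch Ct q qd.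
split; first exact: modH_sub_kinetic_le.
exact (modH_sub_energyH_le A w_ge0 (ltW h_gt0) c0_ge0 psi1_le phi_le phiB1_le q qd).
Qed.
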